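(* Let $G$ be an instance, $b>1$ and $R\ge 0$. If $H$ is a minimal motivating subgraph of $G$ for reward $R$, then the edge set of $H$ forms a single directed path from $s$ to $t$.
   Context: An instance is a finite directed acyclic graph $G=(V,E)$ with nonnegative edge costs $c(u,v)$, start node $s$ and target node $t$, where $t$ has no outgoing edges. For a subgraph $H$ of $G$ (obtained by deleting edges), the sophisticated agent with bias $b$ and reward $R$ at $t$ behaves in $H$ as follows: process nodes in reverse topological order; $t$ is never abandoned and $C_R(t)=0$; for $u\ne t$, among out-edges $(u,v)$ of $H$ with $v$ not abandoned let $P(u,v)=b\,c(u,v)+C_R(v)$; if none exists or all have $P(u,v)>R$, $u$ is abandoned; otherwise the agent at $u$ moves to $v^*(u)\in\arg\min P(u,v)$ and $C_R(u)=c(u,v^*(u))+C_R(v^*(u))$. The agent is motivated to traverse $H$ if $s$ is not abandoned in $H$. A minimal motivating subgraph for reward $R$ is a subgraph $H$ of $G$ that the agent is motivated to traverse for reward $R$, while it is not motivated to traverse any proper subgraph of $H$ for reward $R$. *)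

From HB Require Import structures.
From mathcomp Require Import all_boot all_order all_algebra.
Set Implicit Arguments. Unset Strict Implicit. Unset Printing Implicit Defensive.
Import Order.TTheory GRing.Theory Num.Theory.
Local Open Scope ring_scope.

Section Agent.
Variables (R : realFieldType) (V : finType).

Definition edge_rel (E : {set V * V}) : rel V := fun u v => (u, v) \in E.

Definition is_instance (E : {set V * V}) (c : V -> V -> R) (s t : V) : Prop :=
  (forall u v, (u, v) \in E -> ~~ connect (edge_rel E) v u) /\
  (forall u v, (u, v) \in E -> 0 <= c u v) /\
  (forall v, (t, v) \notin E).

Definition tie_breaker (tb : V -> {set V} -> V) : Prop :=
  forall u (M : {set V}), M != set0 -> tb u M \in M.

(* The behaviour of the sophisticated agent with bias b, reward Rw and
   tie-breaking rule tb in subgraph H: A is the set of abandoned nodes,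
   C u = C_R(u), nxt u = v*(u).  This records exactly the defining equations
   of the reverse-topological-order processing. *)
Definition agent_run (c : V -> V -> R) (t : V) (b Rw : R)
    (tb : V -> {set V} -> V) (H : {set V * V})
    (A : {set V}) (C : V -> R) (nxt : V -> V) : Prop :=
  t \notin A /\ C t = 0 /\
  forall u, u != t ->
    let S := [set v | ((u, v) \in H) && (v \notin A)] in
    let P := fun v => b * c u v + C v in
    let M := [set v in S | [forall w in S, P v <= P w]] in
    ((u \in A) = (S == set0) || [forall v in S, Rw < P v]) /\
    (u \notin A -> nxt u = tb u M /\ C u = c u (nxt u) + C (nxt u)).

Definition motivated (c : V -> V -> R) (s t : V) (b Rw : R)
    (tb : V -> {set V} -> V) (H : {set V * V}) : Prop :=
  exists A C nxt, agent_run c t b Rw tb H A C nxt /\ s \notin A.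

Definition minimal_motivating (E : {set V * V}) (c : V -> V -> R) (s t : V)
    (b Rw : R) (tb : V -> {set V} -> V) (H : {set V * V}) : Prop :=
  H \subset E /\ motivated c s t b Rw tb H /\
  forall H' : {set V * V}, H' \proper H -> ~ motivated c s t b Rw tb H'.

Definition is_st_path (s t : V) (H : {set V * V}) : Prop :=
  exists p : seq V, uniq (s :: p) /\ last s p = t /\
    H = [set e | e \in zip (s :: p) p].

End Agent.

(** Every non-abandoned node [u <> t] of a run keeps its chosen out-edge
    [(u, v*(u))], whose perceived cost is within the reward, and [v*(u)] is
    again non-abandoned.  Since the graph is finite and acyclic, following
    [v*] from [s] gives a simple path to [t].  On this path alone the agent
    makes exactly the same choices with the same costs, so it is motivated to
    traverse the path; minimality of [H] forces [H] to be that path. *)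

From HB Require Import structures.
From mathcomp Require Import all_boot all_order all_algebra.
Import Order.TTheory GRing.Theory Num.Theory.
Local Open Scope ring_scope.

Definition next_until {T : eqType} (f : T -> T) (t : T) : rel T :=
  fun a b => (a != t) && (b == f a).

Definition path_edges {T : finType} (s : T) (p : seq T) : {set T * T} :=
  [set e | e \in zip (s :: p) p].

Section PathZip.
Context {T : eqType}.

Lemma mem_zip_path (e : rel T) x p u v :
  path e x p -> (u, v) \in zip (x :: p) p ->
  [/\ u \in x :: p, v \in p & e u v].
Proof.
elim: p x => [|y p IH] x //= /andP[exy eyp].
rewrite in_cons => /predU1P[[-> ->]|uv].
  by split; rewrite ?eqxx ?mem_head.
have [uyp vp euv] := IH y eyp uv.
by split=> //; rewrite ?uyp ?orbT // in_cons vp orbT.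
Qed.

Lemma mem_zip_succ x (p : seq T) u :
  u \in x :: p -> u != last x p -> exists v, (u, v) \in zip (x :: p) p.
Proof.
elim: p x => [|y p IH] x /=; first by rewrite mem_seq1 => /eqP ->; rewrite eqxx.
rewrite in_cons => /predU1P[-> _|uyp ul]; first by exists y; rewrite mem_head.
by have [v uv] := IH y uyp ul; exists v; rewrite in_cons uv orbT.
Qed.

End PathZip.

Arguments mem_zip_path {T e x p u v}.
Arguments mem_zip_succ {T x p u}.

Section AcyclicRel.
Context {T : finType} {e : rel T}.
Hypothesis acyclic_e : forall u v, e u v -> ~~ connect e v u.

Lemma acyclic_path_uniq x p : path e x p -> uniq (x :: p).
Proof.
pose reach_lt := [rel u v | connect e u v && ~~ connect e v u].
have lt_trans : transitive reach_lt.
  move=> v u w /andP[uv nvu] /andP[vw nwv]; rewrite /= (connect_trans uv vw).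
  by apply: contra nvu; apply: connect_trans vw.
have lt_irr : irreflexive reach_lt by move=> u; rewrite /= connect0.
move=> exp; apply: (sorted_uniq lt_trans lt_irr); apply: sub_path exp.
by move=> u v euv; rewrite /= connect1 ?acyclic_e.
Qed.

Lemma card_connect_lt u v :
  e u v -> (#|[set w | connect e v w]| < #|[set w | connect e u w]|)%N.
Proof.
move=> euv; apply: proper_card; apply/properP; split.
  by apply/subsetP => w; rewrite !inE; apply: connect_trans (connect1 euv).
by exists u; rewrite !inE ?connect0 // (negbTE (acyclic_e _ _ euv)).
Qed.

Context {X : pred T} {f : T -> T} {t : T}.
Hypothesis f_step : forall u, X u -> u != t -> e u (f u) && X (f u).

Lemma exists_path_to_target {u} : X u ->
  exists p, [/\ path (next_until f t) u p, last u p = t,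
                all X (u :: p) & uniq (u :: p)].
Proof.
move=> Xu.
suff : exists p, [/\ path (next_until f t) u p, last u p = t & all X (u :: p)].
  case=> p [fp lp Xp]; exists p; split=> //; apply: acyclic_path_uniq.
  apply: sub_in_path Xp fp => v w Xv _ /andP[vt /eqP ->].
  by case/andP: (f_step _ Xv vt).
have [n] := ubnP #|[set w | connect e u w]|.
elim: n u Xu => [|n IH] u Xu lt_un; first by rewrite ltn0 in lt_un.
have [<-|ut] := eqVneq u t; first by exists [::]; rewrite /= Xu.
have /andP[euf Xf] := f_step _ Xu ut.
have lt_fn := leq_trans (card_connect_lt _ _ euf) (ltnSE lt_un).
have [p [fp lp Xp]] := IH (f u) Xf lt_fn.
by exists (f u :: p); rewrite /= /next_until ut eqxx fp lp Xu.
Qed.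

End AcyclicRel.

Lemma minimizers_neq0 {d} {O : orderType d} {T : finType} (S : {set T})
    (f : T -> O) :
  S != set0 -> [set v in S | [forall w in S, (f v <= f w)%O]] != set0.
Proof.
case/set0Pn=> v0 Sv0; have [v Sv vmin] := arg_minP f Sv0.
apply/set0Pn; exists v; rewrite inE; apply/andP; split; first exact: Sv.
by apply/forall_inP => w; apply: vmin.
Qed.

Section Agent.
Context {R : realFieldType} {V : finType} {c : V -> V -> R} {t : V}.
Context {b Rw : R} {tb : V -> {set V} -> V} {C : V -> R} {nx : V -> V}.
Hypothesis tbP : tie_breaker tb.

Lemma agent_run_next {H A u} :
  agent_run c t b Rw tb H A C nx -> u \notin A -> u != t ->
  [/\ (u, nx u) \in H, nx u \notin A,
      b * c u (nx u) + C (nx u) <= Rw & C u = c u (nx u) + C (nx u)].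
Proof.
move=> [_ [_ run]] uA ut; have [Aeq nxt] := run u ut.
move: Aeq nxt; set S := [set v | _]; set M := [set v in S | _] => Aeq nxt.
have [nxE Cu] := nxt uA.
have : ~~ ((S == set0) || [forall v in S, Rw < b * c u v + C v]).
  by rewrite -Aeq.
rewrite negb_or => /andP[S0 /forall_inPn[v Sv]]; rewrite -leNgt => Pv.
have := tbP u M (minimizers_neq0 S (fun v => b * c u v + C v) S0).
rewrite -nxE inE => /andP[]; rewrite inE => /andP[Hnx nxA] /forall_inP nxmin.
by split=> //; apply: le_trans (nxmin v Sv) Pv.
Qed.

Lemma agent_run_path {s p} :
  path (next_until nx t) s p -> last s p = t -> C t = 0 ->
  (forall u, u \in s :: p -> u != t ->
     b * c u (nx u) + C (nx u) <= Rw /\ C u = c u (nx u) + C (nx u)) ->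
  agent_run c t b Rw tb (path_edges s p) [set u | u \notin s :: p] C nx.
Proof.
move=> fp lp Ct affordable; split; first by rewrite inE negbK -lp mem_last.
split=> // u ut /=.
have [up|/negbTE un] := boolP (u \in s :: p); last first.
  have -> : [set v | ((u, v) \in path_edges s p)
                     && (v \notin [set w | w \notin s :: p])] = set0.
    apply/setP => v; rewrite !inE; apply/negbTE.
    by apply/negP => /andP[/(mem_zip_path fp)[]]; rewrite un.
  by rewrite inE un eqxx.
have [v uv] : exists v, (u, v) \in zip (s :: p) p.
  by apply: mem_zip_succ up _; rewrite lp.
have [_ vp /andP[_ /eqP vE]] := mem_zip_path fp uv.
have -> : [set v | ((u, v) \in path_edges s p)
                   && (v \notin [set w | w \notin s :: p])] = [set nx u].
  apply/setP => w; rewrite !inE negbK; apply/andP/eqP.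
    by case=> /(mem_zip_path fp)[_ _ /andP[_ /eqP]].
  by move=> ->; rewrite -vE uv vp orbT.
have [Pu Cu] := affordable u up ut.
rewrite inE up -cards_eq0 cards1 /=; split.
  by apply/esym/negbTE/forall_inPn; exists (nx u); rewrite ?set11 // -leNgt.
move=> _; split=> //.
have -> : [set v in [set nx u] | [forall w in [set nx u],
            b * c u v + C v <= b * c u w + C w]] = [set nx u].
  apply/setP => w; rewrite !inE andb_idr // => /eqP ->.
  by apply/forall_inP => w'; rewrite inE => /eqP ->.
by apply/esym/set1P/tbP; rewrite -cards_eq0 cards1.
Qed.

End Agent.

Theorem claim3 (R : realFieldType) (V : finType) (E : {set V * V})
    (c : V -> V -> R) (s t : V) (b Rw : R) (tb : V -> {set V} -> V)
    (H : {set V * V}) :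
  is_instance E c s t -> tie_breaker tb -> 1 < b -> 0 <= Rw ->
  minimal_motivating E c s t b Rw tb H ->
  is_st_path s t H.
Proof.
move=> [acyclicE _] tbP _ _ [HE [[A [C [nx [run sA]]]] Hmin]].
have nx_step u : u \notin A -> u != t ->
    edge_rel E u (nx u) && (nx u \notin A).
  move=> uA ut; have [Hnx nxA _ _] := agent_run_next tbP run uA ut.
  by rewrite /edge_rel (subsetP HE _ Hnx).
have [p [fp lp Ap up]] :=
  exists_path_to_target (X := [pred u | u \notin A]) acyclicE nx_step sA.
have sub : path_edges s p \subset H.
  apply/subsetP => -[u v]; rewrite inE => /(mem_zip_path fp)[us _].
  case/andP=> ut /eqP ->.
  by have [] := agent_run_next tbP run (allP Ap u us) ut.
have mot : motivated c s t b Rw tb (path_edges s p).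
  exists [set u | u \notin s :: p], C, nx; split; last by rewrite inE mem_head.
  have Ct : C t = 0 by case: run => _ [].
  apply: (agent_run_path tbP fp lp Ct) => u us ut.
  by have [_ _ ? ?] := agent_run_next tbP run (allP Ap u us) ut.
exists p; do !split=> //; apply/eqP; rewrite eqEsubset sub andbT.
by apply: contraT => nsub; case: (Hmin _ _ mot); rewrite properE sub.
Qed.
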